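(* Let $G$ be a connected claw-free graph of order $n\ge 4$. Then $\gamma_{cI}(G)=n/2$ if and only if $G\in\Omega$.
   Context: All graphs are finite and simple; $N(v)$ is the open neighborhood of $v$. $G$ is claw-free if it has no induced subgraph isomorphic to $K_{1,3}$. For $f:V(G)\to\{0,1,2\}$ let $V_i=\{v: f(v)=i\}$ and $\omega(f)=\sum_v f(v)$. A covering Italian dominating function (CID function) of $G$ is an $f:V(G)\to\{0,1,2\}$ such that every vertex $v$ with $f(v)=0$ satisfies $\sum_{u\in N(v)}f(u)\ge 2$, and $V_0$ is an independent set. $\gamma_{cI}(G)$ is the minimum of $\omega(f)$ over all CID functions of $G$. A $k$-sun whose Hamiltonian graph is a cycle ($k\ge3$): take a cycle $v_1v_2\cdots v_kv_1$ and add $k$ new vertices $u_1,\dots,u_k$ with $u_i$ adjacent exactly to $v_i$ and $v_{i+1}$ (where $v_{k+1}=v_1$). A $k$-triangle ($k\ge1$): a path $v_1v_2\cdots v_k$ together with $k-1$ new vertices $u_1,\dots,u_{k-1}$, where $u_j$ is adjacent exactly to $v_j$ and $v_{j+1}$ (so it has $k-1$ triangles; a $1$-triangle is a single vertex). The graph $G(k_1,\dots,k_r)$: take disjoint copies of a $k_1$-triangle, a $k_2$-triangle, ..., a $k_r$-triangle, the $i$-th with path $v^i_1\cdots v^i_{k_i}$; then add $r$ new vertices $w_1,\dots,w_r$, where $w_i$ is adjacent exactly to $v^i_{k_i}$ and $v^{i+1}_1$ (indices of the triangles taken cyclically, so $w_r$ is adjacent to $v^r_{k_r}$ and $v^1_1$).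 (For example, $G(1,\dots,1)$ with $r$ entries is the cycle $C_{2r}$, and with a single entry $G(2)\cong K_4-e$.) $\Omega$ is the family of graphs $G$ that either (i) are a $k$-sun whose Hamiltonian graph is a cycle, or (ii) are of the form $G(k_1,\dots,k_r)$. *)

From mathcomp Require Import all_boot.
Set Implicit Arguments. Unset Strict Implicit. Unset Printing Implicit Defensive.

Section Graphs.
Variable T : finType.
Variable e : rel T.

Definition simple_graph := symmetric e /\ irreflexive e.

Definition connected_graph := forall x y : T, connect e x y.

Definition claw_free := forall v a b c : T,
  e v a -> e v b -> e v c -> a != b -> a != c -> b != c ->
  [|| e a b, e a c | e b c].

Definition is_CID (f : {ffun T -> 'I_3}) :=
  [forall v, (f v == 0 :> nat) ==> (2 <= \sum_(u | e v u) (f u : nat))] &&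
  [forall u, forall v, ((f u == 0 :> nat) && (f v == 0 :> nat)) ==> ~~ e u v].

Definition weight (f : {ffun T -> 'I_3}) := \sum_(v : T) (f v : nat).

(* minimum weight; the constant-2 function is always a CID, so 2*|V| is an upper bound *)
Definition gamma_cI :=
  \big[minn/(2 * #|T|)]_(f : {ffun T -> 'I_3} | is_CID f) weight f.
End Graphs.

Inductive lab := LV of nat & nat | LU of nat & nat | LW of nat.

(* k-sun: cycle v_0..v_{k-1} (labels LV 0 j), u_j (labels LU 0 j) adjacent to v_j, v_{j+1 mod k} *)
Definition sun_valid (k : nat) (l : lab) : bool :=
  match l with
  | LV i j => (i == 0) && (j < k)
  | LU i j => (i == 0) && (j < k)
  | LW _ => false
  end.

Definition sun_adj0 (k : nat) (a b : lab) : bool :=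
  match a, b with
  | LV _ j, LV _ j' => j' == (j.+1 %% k)
  | LU _ j, LV _ j' => (j' == j) || (j' == j.+1 %% k)
  | _, _ => false
  end.

Definition sun_adj k a b := sun_adj0 k a b || sun_adj0 k b a.

(* G(k_1,...,k_r): triangle chain i (0-based) has path LV i 0 .. LV i (k_i - 1) and
   LU i j adjacent to LV i j and LV i (j+1); LW i adjacent to LV i (k_i - 1)
   and LV ((i+1) mod r) 0. *)
Definition G_valid (ks : seq nat) (l : lab) : bool :=
  match l with
  | LV i j => (i < size ks) && (j < nth 0 ks i)
  | LU i j => (i < size ks) && (j.+1 < nth 0 ks i)
  | LW i => i < size ks
  end.

Definition G_adj0 (ks : seq nat) (a b : lab) : bool :=
  match a, b with
  | LV i j, LV i' j' => (i' == i) && (j' == j.+1)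
  | LU i j, LV i' j' => (i' == i) && ((j' == j) || (j' == j.+1))
  | LW i, LV i' j' =>
      ((i' == i) && (j' == (nth 0 ks i).-1)) ||
      ((i' == i.+1 %% size ks) && (j' == 0))
  | _, _ => false
  end.

Definition G_adj ks a b := G_adj0 ks a b || G_adj0 ks b a.

Definition iso_to (T : finType) (e : rel T) (valid : lab -> bool) (adj : lab -> lab -> bool) :=
  exists phi : T -> lab,
    [/\ injective phi, forall x, valid (phi x),
        forall l, valid l -> exists x, phi x = l
      & forall x y, e x y = adj (phi x) (phi y)].

Definition in_Omega (T : finType) (e : rel T) :=
  (exists k, 3 <= k /\ iso_to e (sun_valid k) (sun_adj k)) \/
  (exists ks : seq nat, 0 < size ks /\ all (fun k => 0 < k) ks /\
     iso_to e (G_valid ks) (G_adj ks)).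

(* Let f be a CID function with zero set Z. Since Z is independent, a vertex
   with three neighbours in Z would centre a claw; so every vertex has at most
   two neighbours in Z, and double counting the sums f(N(v)), v in Z, gives
   2|Z| <= 2 w(f). As also |V \ Z| <= w(f), we get n <= 2 gamma_cI.
   In case of equality f is {0,1}-valued and every vertex has exactly two
   neighbours on the other side of the cut (Z, V \ Z). Two adjacent nonzero
   vertices share a zero neighbour (claw-freeness again), so these cut edges
   form a Hamiltonian cycle v_0 w_0 v_1 w_1 ... with w_p in Z, and G consists
   of this cycle plus some rim edges v_p v_(p+1). If all rim edges are present,
   G is a sun (or G(2) = K_4 - e when n = 4); otherwise the missing ones cut the
   rim into the triangle chains of some G(k_1, ..., k_r).
   Conversely, on a graph of Omega the indicator of the path vertices is a CID
   function: every other vertex sees two of them, and they inject into the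
   other vertices, so its weight is at most n/2. *)

From mathcomp Require Import all_boot zify.
From Stdlib Require Import ClassicalEpsilon.
Set Implicit Arguments. Unset Strict Implicit. Unset Printing Implicit Defensive.

Lemma leq_sum_eq (I : finType) (P : pred I) (F G : I -> nat) :
  (forall i, P i -> F i <= G i) -> \sum_(i | P i) G i <= \sum_(i | P i) F i ->
  forall i, P i -> F i = G i.
Proof.
move=> leFG leGF i Pi.
have [sum_leFG sum_eqFG] := leqif_sum (fun i Pi => leqif_eq (leFG i Pi)).
have : [forall (i | P i), F i == G i] by rewrite -sum_eqFG eqn_leq sum_leFG.
by move/forall_inP/(_ i Pi)/eqP.
Qed.

Lemma bigminn_le (I : finType) (P : pred I) (F : I -> nat) x0 i0 :
  P i0 -> \big[minn/x0]_(i | P i) F i <= F i0.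
Proof.
move=> Pi0; rewrite /index_enum; have : i0 \in Finite.enum I by rewrite -enumT mem_enum.
elim: (Finite.enum I) => [//|a r IHr]; rewrite inE big_cons.
case/orP=> [/eqP<-|/IHr]; first by rewrite Pi0 geq_minl.
by case: (P a) => // le_r; rewrite geq_min le_r orbT.
Qed.

Lemma card_sum_nat (T : finType) (A : {pred T}) : #|A| = \sum_i (i \in A : nat).
Proof. by rewrite -sum1_card big_mkcond. Qed.

(** * Weight of CID functions in claw-free graphs *)

Definition zero_at (T : finType) (f : {ffun T -> 'I_3}) v := (f v == 0 :> nat).

Section CIDWeight.
Variables (T : finType) (e : rel T).
Hypotheses (e_sym : symmetric e) (e_claw_free : claw_free e).
Variable f : {ffun T -> 'I_3}.
Hypothesis f_CID : is_CID e f.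

Local Notation zero := (zero_at f).

Lemma CID_zero_nbr_sum v : zero v -> 2 <= \sum_(u | e v u) f u.
Proof. by case/andP: f_CID => /forallP/(_ v)/implyP. Qed.

Lemma CID_zeros_nonadj u v : zero u -> zero v -> e u v = false.
Proof.
case/andP: f_CID => _ /forallP/(_ u)/forallP/(_ v)/implyP ind zu zv.
by apply/negbTE/ind; rewrite /zero_at in zu zv; rewrite zu zv.
Qed.

Definition zero_deg u := #|[pred v | zero v && e v u]|.

Lemma zero_deg_le2 u : zero_deg u <= 2.
Proof.
rewrite leqNgt; apply/negP=> /card_gt2P [a [b [c [[Ha Hb Hc] [ab bc ca]]]]].
move: Ha Hb Hc; rewrite !inE => /andP[za eau] /andP[zb ebu] /andP[zc ecu].
have := e_claw_free (v:=u) (a:=a) (b:=b) (c:=c).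
rewrite ![e u _]e_sym eau ebu ecu ab eq_sym ca bc !CID_zeros_nonadj //.
by move=> /(_ isT isT isT isT isT isT).
Qed.

Lemma sum_zero_nbr_sums :
  \sum_(v | zero v) \sum_(u | e v u) (f u : nat) = \sum_u f u * zero_deg u.
Proof.
rewrite (exchange_big_dep predT) //=; apply: eq_bigr => u _.
by rewrite sum_nat_const mulnC.
Qed.

Local Notation zeros := [set v | zero v].

Lemma double_card_zeros_le : #|zeros|.*2 <= \sum_u f u * zero_deg u.
Proof.
rewrite -sum_zero_nbr_sums card_sum_nat -mul2n big_distrr /= [leqRHS]big_mkcond /=.
apply: leq_sum => v _; rewrite inE; case: (boolP (zero v)) => zv /=; last by rewrite muln0.
by rewrite muln1; apply: CID_zero_nbr_sum.
Qed.

Lemma sum_zero_deg_le : \sum_u f u * zero_deg u <= (weight f).*2.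
Proof.
rewrite -mul2n big_distrr /=; apply: leq_sum => u _.
by rewrite mulnC leq_mul2r zero_deg_le2 orbT.
Qed.

Lemma card_zeros_le_weight : #|zeros| <= weight f.
Proof. by rewrite -leq_double (leq_trans double_card_zeros_le sum_zero_deg_le). Qed.

Lemma nonzero_le v : (v \in ~: zeros : nat) <= f v.
Proof. by rewrite !inE /zero_at; case: (f v : nat). Qed.

Lemma card_nonzeros_le_weight : #|~: zeros| <= weight f.
Proof. by rewrite card_sum_nat; apply: leq_sum => v _; apply: nonzero_le. Qed.

Lemma card_le_double_weight : #|T| <= (weight f).*2.
Proof.
by rewrite -(cardsC zeros) -addnn leq_add ?card_zeros_le_weight ?card_nonzeros_le_weight.
Qed.

Section Tight.
Hypothesis f_tight : (weight f).*2 = #|T|.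

Lemma tight_card_zeros : #|zeros| = weight f.
Proof.
have := cardsC zeros; have := card_zeros_le_weight; have := card_nonzeros_le_weight.
lia.
Qed.

Lemma tight_card_nonzeros : #|~: zeros| = weight f.
Proof. by have := cardsC zeros; rewrite tight_card_zeros; lia. Qed.

Lemma tight_le1 v : f v <= 1.
Proof.
have := leq_sum_eq (fun i (_ : true) => nonzero_le i).
rewrite -card_sum_nat tight_card_nonzeros leqnn => /(_ isT v isT).
by rewrite !inE /zero_at; case: (f v : nat) => [|[]].
Qed.

Lemma tight_zero_nbr_sum v : zero v -> \sum_(u | e v u) (f u : nat) = 2.
Proof.
move=> zv; symmetry; apply: (leq_sum_eq CID_zero_nbr_sum _ zv).
rewrite sum_zero_nbr_sums sum_nat_cond_const.
by have := sum_zero_deg_le; rewrite tight_card_zeros; lia.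
Qed.

Lemma tight_zero_deg u : ~~ zero u -> zero_deg u = 2.
Proof.
move=> nzu.
have le_deg i : true -> f i * zero_deg i <= f i * 2 by rewrite leq_mul2l zero_deg_le2 orbT.
have fu : (f u : nat) = 1.
  by move: (tight_le1 u) nzu; rewrite /zero_at; case: (f u : nat) => [|[]].
have := leq_sum_eq le_deg => /(_ _ u isT); rewrite fu !mul1n; apply.
by rewrite -big_distrl /=; have := double_card_zeros_le; rewrite tight_card_zeros /weight; lia.
Qed.

End Tight.
End CIDWeight.

(** * Connected 2-regular graphs are cycles *)

Lemma modSn_eq n t : t < n -> t.+1 %% n = if t.+1 == n then 0 else t.+1.
Proof. by move=> lt_tn; case: eqP => [->|ne]; rewrite ?modnn // modn_small //; lia. Qed.

Lemma modS_neq m p : 1 < m -> p < m -> p.+1 %% m != p.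
Proof. by move=> m_gt1 lt_p; rewrite modSn_eq //; case: ifP => /eqP; lia. Qed.

Lemma modS_eq0 m p : p < m -> (p.+1 %% m == 0) = (p == m.-1).
Proof. by move=> lt_p; rewrite modSn_eq //; case: ifP => /eqP; lia. Qed.

Definition hamiltonian_enum (T : finType) (B : rel T) (s : nat -> T) :=
  [/\ forall a b, a < #|T| -> b < #|T| -> s a = s b -> a = b,
      forall x, exists2 t, t < #|T| & s t = x
    & forall t t', t < #|T| -> t' < #|T| ->
        B (s t) (s t') = (t' == t.+1 %% #|T|) || (t == t'.+1 %% #|T|)].

Section TwoRegular.
Variables (T : finType) (B : rel T).
Hypotheses (B_sym : symmetric B) (B_irr : irreflexive B).
Hypothesis B_deg2 : forall x, #|[set y | B x y]| = 2.
Hypothesis B_connected : forall x y, connect B x y.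

Lemma deg2_nbr v a b y : B v a -> B v b -> a != b -> B v y -> (y == a) || (y == b).
Proof.
move=> Ba Bb ab By.
have nbrs : [set a; b] = [set y | B v y].
  apply/eqP; rewrite eqEcard B_deg2 cards2 ab andbT.
  by apply/subsetP=> x; rewrite !inE => /orP[]/eqP->.
have : y \in [set y | B v y] by rewrite inE.
by rewrite -nbrs !inE.
Qed.

Definition other_nbr p v := odflt v [pick y | B v y && (y != p)].

Lemma other_nbrP p v : B v (other_nbr p v) && (other_nbr p v != p).
Proof.
rewrite /other_nbr; case: pickP => [y //|none].
have : 1 < #|[set y | B v y]| by rewrite B_deg2.
case/card_gt1P=> x [y [Bx By xy]]; rewrite !inE in Bx By.
case: (eqVneq x p) => [xp|]; last by move/(conj Bx)/andP; rewrite none.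
by move: (none y); rewrite By -xp eq_sym xy.
Qed.

Variables s0 s1 : T.
Hypothesis B_s01 : B s0 s1.

Definition walk t := (iter t (fun pr : T * T => (pr.2, other_nbr pr.1 pr.2)) (s0, s1)).1.

Lemma walkSS t : walk t.+2 = other_nbr (walk t) (walk t.+1).
Proof. by rewrite /walk !iterS. Qed.

Lemma walk_edge t : B (walk t) (walk t.+1).
Proof.
elim: t => [//|t IHt]; rewrite walkSS.
by case/andP: (other_nbrP (walk t) (walk t.+1)).
Qed.

Lemma walk_nonbacktracking t : walk t.+2 != walk t.
Proof. by rewrite walkSS; case/andP: (other_nbrP (walk t) (walk t.+1)). Qed.

Lemma walk_neqS t : walk t.+1 != walk t.
Proof. by apply/eqP=> E; have := walk_edge t; rewrite E B_irr. Qed.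

Definition revisits j := [exists i : 'I_j, walk i == walk j].

Lemma exists_revisit : exists j, revisits j.
Proof.
pose g := fun i : 'I_(#|T|.+1) => walk i.
have : ~~ injectiveb g by apply/negP=> /injectiveP/leq_card; rewrite card_ord; lia.
case/injectivePn=> a [b ab gab].
case: (ltngtP a b) => [lt|lt|E]; last by rewrite (val_inj E) eqxx in ab.
  by exists b; apply/existsP; exists (Ordinal lt); apply/eqP.
by exists a; apply/existsP; exists (Ordinal lt); apply/eqP.
Qed.

Definition period := ex_minn exists_revisit.

Lemma period_revisits : revisits period.
Proof. by rewrite /period; case: ex_minnP. Qed.

Lemma period_min j : revisits j -> period <= j.
Proof. by rewrite /period; case: ex_minnP => n _; apply. Qed.

Lemma walk_inj a b : a < period -> b < period -> walk a = walk b -> a = b.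
Proof.
wlog lt_ab : a b / a < b.
  by move=> W lt_a lt_b E; case: (ltngtP a b) => // lt; [|symmetry]; apply: W.
move=> _ lt_b E; have : revisits b by apply/existsP; exists (Ordinal lt_ab); rewrite /= E.
by move/period_min; lia.
Qed.

(* A first repetition walk period = walk i.+1 would give walk i.+1 a third
   neighbour walk period.-1. *)
Lemma walk_period : walk period = walk 0.
Proof.
case/existsP: period_revisits => -[[|i] lt_i] /= /eqP E; first by rewrite E.
exfalso.
have lt_i2 : i.+2 < period.
  case: (ltngtP i.+2 period) => // [|E2]; first lia.
  by move: (walk_neqS i.+1); rewrite E2 E eqxx.
have d : walk i != walk i.+2 by apply/eqP=> /walk_inj; lia.
have Bi : B (walk i.+1) (walk i) by rewrite B_sym walk_edge.
have Bp : B (walk i.+1) (walk period.-1).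
  by rewrite E B_sym; have := walk_edge period.-1; rewrite prednK //; lia.
case/orP: (deg2_nbr Bi (walk_edge i.+1) d Bp) => /eqP /walk_inj; first lia.
move=> E3; have E4 : period = i.+3 by lia.
by move: (walk_nonbacktracking i.+1); rewrite -E4 E eqxx.
Qed.

Lemma period_ge3 : 3 <= period.
Proof.
case/existsP: period_revisits => -[i lt_i] _.
case: (ltngtP period 3) => // lt; have [E|E] : period = 1 \/ period = 2 by lia.
  by move: (walk_neqS 0); rewrite -E walk_period eqxx.
by move: (walk_nonbacktracking 0); rewrite -E walk_period eqxx.
Qed.

Lemma walk_edge_mod t : t < period -> B (walk t) (walk (t.+1 %% period)).
Proof.
move=> lt_t; rewrite modSn_eq //; case: eqP => [E|_]; last exact: walk_edge.
by rewrite -walk_period -E walk_edge.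
Qed.

Lemma walk_nbr t y : t < period -> B (walk t) y ->
  exists2 t', t' < period & y = walk t' /\ (t' == t.+1 %% period) || (t == t'.+1 %% period).
Proof.
move=> lt_t Bty.
pose p := if t is u.+1 then u else period.-1.
have lt_p : p < period by rewrite /p; case: (t) lt_t; lia.
have pS : p.+1 %% period = t.
  rewrite modSn_eq // /p; case: (t) lt_t => [|u] lt_u; case: eqP; lia.
have Bn := walk_edge_mod lt_t.
have Bp : B (walk t) (walk p) by rewrite B_sym -pS walk_edge_mod.
have np : walk (t.+1 %% period) != walk p.
  apply/eqP=> /walk_inj; rewrite ltn_mod; have := period_ge3.
  by rewrite modSn_eq // /p; case: (t) lt_t => [|u] lt_u; case: eqP; lia.
case/orP: (deg2_nbr Bn Bp np Bty) => /eqP->.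
  by exists (t.+1 %% period); rewrite ?ltn_mod ?eqxx //; lia.
by exists p; rewrite ?pS ?eqxx ?orbT.
Qed.

Lemma walk_adj t t' : t < period -> t' < period ->
  B (walk t) (walk t') = (t' == t.+1 %% period) || (t == t'.+1 %% period).
Proof.
move=> lt_t lt_t'; apply/idP/idP.
  by case/(walk_nbr lt_t)=> u lt_u [/walk_inj-> //].
by case/orP=> /eqP->; rewrite ?walk_edge_mod // B_sym walk_edge_mod.
Qed.

Lemma walk_cover : [set walk i | i : 'I_period] = [set: T].
Proof.
pose S := [set walk i | i : 'I_period].
have closedS : closed B (mem S).
  suff nbrS x y : B x y -> x \in S -> y \in S.
    by move=> x y Bxy; apply/idP/idP; apply: nbrS; rewrite // B_sym.
  move=> Bxy /imsetP[i _ Ex]; rewrite Ex in Bxy.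
  by case: (walk_nbr (ltn_ord i) Bxy) => t lt_t [-> _]; apply/imsetP; exists (Ordinal lt_t).
apply/setP=> x; rewrite inE -(closed_connect closedS (B_connected (walk 0) x)).
by apply/imsetP; exists (Ordinal (leq_trans (isT : 0 < 3) period_ge3)).
Qed.

Lemma period_card : period = #|T|.
Proof.
rewrite -cardsT -walk_cover card_imset ?card_ord // => a b /walk_inj E.
exact/val_inj/E.
Qed.

Lemma walk_hamiltonian : hamiltonian_enum B walk.
Proof.
rewrite /hamiltonian_enum -period_card; split; [exact: walk_inj | | exact: walk_adj].
move=> x; have : x \in [set walk i | i : 'I_period] by rewrite walk_cover inE.
by case/imsetP=> i _ ->; exists i.
Qed.

End TwoRegular.

(** * Necklaces and the graphs of Omega *)

Lemma oddS_double p : odd p.*2.+1. Proof. by rewrite /= odd_double. Qed.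

Lemma halfS_double p : p.*2.+1./2 = p.
Proof. by rewrite -[p.*2.+1]/(true + p.*2) half_bit_double. Qed.

Lemma neq_double_oddS p q : p.*2 <> q.*2.+1.
Proof. by move/(congr1 odd); rewrite odd_double oddS_double. Qed.

(* Position 2p stands for the path vertex v_p and 2p+1 for the tip adjacent to v_p
   and v_(p+1 mod m); [c p] tells whether v_p v_(p+1 mod m) is an edge. *)
Definition path_adj m (c : pred nat) p q := (q == p.+1 %% m) && c p.
Definition tip_adj m p q := (q == p) || (p == q.+1 %% m).
Definition necklace_adj m (c : pred nat) (t t' : nat) :=
  match odd t, odd t' with
  | false, false => path_adj m c t./2 t'./2 || path_adj m c t'./2 t./2
  | false, true => tip_adj m t./2 t'./2
  | true, false => tip_adj m t'./2 t./2
  | true, true => false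
  end.

Definition necklace_enum (T : finType) (e : rel T) m (c : pred nat) (s : nat -> T) :=
  [/\ forall a b, a < m.*2 -> b < m.*2 -> s a = s b -> a = b,
      forall x, exists2 t, t < m.*2 & s t = x
    & forall a b, a < m.*2 -> b < m.*2 -> e (s a) (s b) = necklace_adj m c a b].

Lemma iso_to_of_necklace (T : finType) (e : rel T) (valid : pred lab) (adj : rel lab)
    m (c : pred nat) (s : nat -> T) (pos : lab -> nat) :
  necklace_enum e m c s ->
  (forall l, valid l -> pos l < m.*2) ->
  (forall l l', valid l -> valid l' -> pos l = pos l' -> l = l') ->
  (forall t, t < m.*2 -> exists2 l, valid l & pos l = t) ->
  (forall l l', valid l -> valid l' -> adj l l' = necklace_adj m c (pos l) (pos l')) ->
  iso_to e valid adj.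
Proof.
move=> [s_inj s_surj s_adj] pos_lt pos_inj pos_surj pos_adj.
have label x : exists l, valid l /\ s (pos l) = x.
  by have [t lt_t <-] := s_surj x; have [l vl <-] := pos_surj t lt_t; exists l.
pose phi x := proj1_sig (constructive_indefinite_description _ (label x)).
have phiP x : valid (phi x) /\ s (pos (phi x)) = x.
  by rewrite /phi; case: constructive_indefinite_description.
exists phi; split.
- by move=> x y E; rewrite -(proj2 (phiP x)) -(proj2 (phiP y)) E.
- by move=> x; case: (phiP x).
- move=> l vl; exists (s (pos l)); case: (phiP (s (pos l))) => vl' E.
  by apply: pos_inj => //; apply: s_inj; rewrite ?pos_lt.
- move=> x y; case: (phiP x) => vx Ex; case: (phiP y) => vy Ey.
  by rewrite -{1}Ex -{1}Ey s_adj ?pos_lt // pos_adj.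
Qed.

Definition sun_pos (l : lab) : nat :=
  match l with LV _ j => j.*2 | LU _ j => j.*2.+1 | LW _ => 0 end.

Lemma sun_iso_of_necklace (T : finType) (e : rel T) m (c : pred nat) (s : nat -> T) :
  3 <= m -> (forall p, p < m -> c p) -> necklace_enum e m c s ->
  iso_to e (sun_valid m) (sun_adj m).
Proof.
move=> m_ge3 c_true s_enum; apply: (iso_to_of_necklace (pos := sun_pos) s_enum).
- by case=> i j //= /andP[_ lt_j]; lia.
- case=> i j // [] i' j' //= /andP[/eqP-> _] /andP[/eqP-> _].
  + by move/double_inj->.
  + by move/neq_double_oddS.
  + by move/esym/neq_double_oddS.
  + by case=> /double_inj->.
- move=> t lt_t; have lt_t2 : t./2 < m by rewrite ltn_half_double.
  case: (boolP (odd t)) => odd_t.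
    by exists (LU 0 t./2); rewrite /= ?lt_t2 // -[RHS]odd_double_half odd_t.
  by exists (LV 0 t./2); rewrite /= ?lt_t2 // even_halfK.
- case=> i j // [] i' j' //= /andP[_ lt_j] /andP[_ lt_j'];
    rewrite /necklace_adj /path_adj /tip_adj ?odd_double ?oddS_double ?doubleK ?halfS_double
      ?c_true ?andbT //.
  all: by rewrite /sun_adj /= ?orbF (eq_sym j).
Qed.

Definition block_start (ks : seq nat) i := sumn (take i ks).

Lemma block_startS ks i : i < size ks -> block_start ks i.+1 = block_start ks i + nth 0 ks i.
Proof. by move=> lt_i; rewrite /block_start (take_nth 0 lt_i) sumn_rcons. Qed.

Lemma block_start0 ks : block_start ks 0 = 0. Proof. by rewrite /block_start take0. Qed.

Lemma block_start_size ks : block_start ks (size ks) = sumn ks.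
Proof. by rewrite /block_start take_size. Qed.

Lemma block_start_mono ks : {homo block_start ks : i i' / i <= i'}.
Proof.
move=> i i' le_ii'; rewrite /block_start -(take_takel ks le_ii').
by rewrite -{2}(cat_take_drop i (take i' ks)) sumn_cat leq_addr.
Qed.

Lemma block_start_lt ks i j : i < size ks -> j < nth 0 ks i -> block_start ks i + j < sumn ks.
Proof.
move=> lt_i lt_j; have := block_start_mono ks lt_i.
by rewrite block_start_size block_startS //; lia.
Qed.

Lemma block_start_inj ks i j i' j' : i < size ks -> j < nth 0 ks i ->
  i' < size ks -> j' < nth 0 ks i' ->
  block_start ks i + j = block_start ks i' + j' -> i = i' /\ j = j'.
Proof.
move=> lt_i lt_j lt_i' lt_j' E.
case: (ltngtP i i') => [lt|lt|eq_ii']; last by subst; split; lia.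
- by have := block_start_mono ks lt; rewrite block_startS //; lia.
- by have := block_start_mono ks lt; rewrite block_startS //; lia.
Qed.

Lemma block_start_surj ks p : p < sumn ks ->
  exists i j, [/\ i < size ks, j < nth 0 ks i & p = block_start ks i + j].
Proof.
elim: ks p => [//|k ks IHks] p /= lt_p.
case: (ltnP p k) => lt_pk; first by exists 0, p; rewrite block_start0.
have [i [j [lt_i lt_j E]]] := IHks (p - k) ltac:(lia).
by exists i.+1, j; split => //; rewrite /block_start /= -/(block_start ks i); lia.
Qed.

(* The rim edges [c] of G(k_1, ..., k_r) laid out as a necklace: the triangle
   chains are consecutive blocks of lengths [ks], separated by absent edges. *)
Definition block_pattern (ks : seq nat) (c : pred nat) :=
  forall i j, i < size ks -> j < nth 0 ks i -> c (block_start ks i + j) = (j.+1 < nth 0 ks i).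

Section GIso.
Variables (ks : seq nat) (c : pred nat).
Hypotheses (ks_nonempty : 0 < size ks) (ks_pos : all (fun k => 0 < k) ks).
Hypothesis c_blocks : block_pattern ks c.

Local Notation m := (sumn ks).
Local Notation r := (size ks).
Local Notation k i := (nth 0 ks i).
Local Notation P i j := (block_start ks i + j).

Lemma nth_ks_gt0 i : i < r -> 0 < k i.
Proof. by move=> lt_i; apply: (all_nthP 0 ks_pos). Qed.

Lemma eq_P i j i' j' : i < r -> j < k i -> i' < r -> j' < k i' ->
  (P i j == P i' j') = (i == i') && (j == j').
Proof.
move=> lt_i lt_j lt_i' lt_j'; apply/eqP/andP => [|[/eqP-> /eqP->] //].
by case/block_start_inj => // -> ->.
Qed.

Lemma G_adj0_path i j i' j' : i < r -> j < k i -> i' < r -> j' < k i' ->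
  G_adj0 ks (LV i j) (LV i' j') = path_adj m c (P i j) (P i' j').
Proof.
move=> lt_i lt_j lt_i' lt_j' /=; rewrite /path_adj c_blocks //.
case: (ltnP j.+1 (k i)) => lt_jk; last first.
  by rewrite andbF; apply/negbTE/negP=> /andP[/eqP E /eqP E']; subst; lia.
have lt_m : (P i j).+1 < m by have := block_start_lt lt_i lt_jk; lia.
by rewrite andbT modn_small // -addnS eq_sym eq_P // eq_sym (eq_sym j').
Qed.

Lemma G_adj0_tip i j i' j' : i < r -> j.+1 < k i -> i' < r -> j' < k i' ->
  G_adj0 ks (LU i j) (LV i' j') = tip_adj m (P i' j') (P i j).
Proof.
move=> lt_i lt_j lt_i' lt_j' /=; rewrite /tip_adj.
have lt_m : (P i j).+1 < m by have := block_start_lt lt_i lt_j; lia.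
rewrite modn_small // -addnS !eq_P //; last lia.
by rewrite (eq_sym i) (eq_sym j); case: (i' == i).
Qed.

Lemma G_adj0_link i i' j' : i < r -> i' < r -> j' < k i' ->
  G_adj0 ks (LW i) (LV i' j') = tip_adj m (P i' j') (P i (k i).-1).
Proof.
move=> lt_i lt_i' lt_j' /=; rewrite /tip_adj.
have k_gt0 := nth_ks_gt0 lt_i.
have E : (P i (k i).-1).+1 = block_start ks i.+1 by rewrite block_startS //; lia.
rewrite eq_P //; last lia.
rewrite (eq_sym i) (eq_sym (k i).-1) E; congr (_ || _).
case: (ltnP i.+1 r) => lt_ir.
  have lt_m := block_start_lt lt_ir (nth_ks_gt0 lt_ir); rewrite addn0 in lt_m.
  by rewrite !modn_small // -[block_start ks i.+1]addn0 eq_P // ?nth_ks_gt0.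
have -> : i.+1 = r by lia.
rewrite modnn block_start_size modnn.
by rewrite -(eq_P lt_i' lt_j' ks_nonempty (nth_ks_gt0 ks_nonempty)) block_start0.
Qed.

Definition G_pos (l : lab) : nat :=
  match l with
  | LV i j => (P i j).*2
  | LU i j => (P i j).*2.+1
  | LW i => (P i (k i).-1).*2.+1
  end.

Lemma G_pos_lt l : G_valid ks l -> G_pos l < m.*2.
Proof.
case: l => [i j|i j|i] /=.
- by case/andP=> lt_i lt_j; have := block_start_lt lt_i lt_j; lia.
- by case/andP=> lt_i lt_j; have := block_start_lt lt_i (ltnW lt_j); lia.
- move=> lt_i; have := nth_ks_gt0 lt_i.
  by have := @block_start_lt ks i (k i).-1 lt_i; lia.
Qed.

Lemma G_pos_inj l l' : G_valid ks l -> G_valid ks l' -> G_pos l = G_pos l' -> l = l'.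
Proof.
have halfS_inj a b : a.*2.+1 = b.*2.+1 -> a = b by move/(congr1 half); rewrite !halfS_double.
case: l l' => [i j|i j|i] [i' j'|i' j'|i'] //=; try by move=> _ _ /neq_double_oddS.
all: try by move=> _ _ /esym/neq_double_oddS.
- case/andP=> lt_i lt_j /andP[lt_i' lt_j'] /double_inj /block_start_inj.
  by case/(_ lt_i lt_j lt_i' lt_j') => -> ->.
- case/andP=> lt_i lt_j /andP[lt_i' lt_j'] /halfS_inj /block_start_inj.
  by case/(_ lt_i (ltnW lt_j) lt_i' (ltnW lt_j')) => -> ->.
- case/andP=> lt_i lt_j lt_i' /halfS_inj /block_start_inj inj.
  move: (nth_ks_gt0 lt_i') => k_gt0.
  by case: (inj lt_i (ltnW lt_j) lt_i' _) => [|ii' jE]; [lia | subst; lia].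
- move=> lt_i /andP[lt_i' lt_j'] /halfS_inj /block_start_inj inj.
  move: (nth_ks_gt0 lt_i) => k_gt0.
  by case: (inj lt_i _ lt_i' (ltnW lt_j')) => [|ii' jE]; [lia | subst; lia].
- move=> lt_i lt_i' /halfS_inj /block_start_inj inj.
  move: (nth_ks_gt0 lt_i) (nth_ks_gt0 lt_i') => k_gt0 k'_gt0.
  by case: (inj lt_i _ lt_i' _) => [||-> //]; lia.
Qed.

Lemma G_pos_surj t : t < m.*2 -> exists2 l, G_valid ks l & G_pos l = t.
Proof.
move=> lt_t; have lt_t2 : t./2 < m by rewrite ltn_half_double.
have [i [j [lt_i lt_j E]]] := block_start_surj lt_t2.
case: (boolP (odd t)) => odd_t; last first.
  by exists (LV i j); rewrite /= ?lt_i ?lt_j // -E even_halfK.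
have tE : t = (t./2).*2.+1 by rewrite -[LHS]odd_double_half odd_t.
case: (ltnP j.+1 (k i)) => lt_jk.
  by exists (LU i j); rewrite /= ?lt_i ?lt_jk // -E.
by exists (LW i) => //=; rewrite tE E; do 3 f_equal; lia.
Qed.

Lemma G_adj_pos l l' : G_valid ks l -> G_valid ks l' ->
  G_adj ks l l' = necklace_adj m c (G_pos l) (G_pos l').
Proof.
rewrite /G_adj /necklace_adj.
case: l l' => [i j|i j|i] [i' j'|i' j'|i'];
  rewrite /G_pos ?odd_double ?oddS_double ?doubleK ?halfS_double.
all: try by [].
- by case/andP=> ? ? /andP[? ?]; rewrite !G_adj0_path.
- by case/andP=> ? ? /andP[? ?]; rewrite G_adj0_tip.
- by case/andP=> ? ? ?; rewrite G_adj0_link.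
- by case/andP=> ? ? /andP[? ?]; rewrite G_adj0_tip; case: tip_adj.
- by move=> ? /andP[? ?]; rewrite G_adj0_link; case: tip_adj.
Qed.

End GIso.

Lemma G_iso_of_necklace (T : finType) (e : rel T) ks (c : pred nat) (s : nat -> T) :
  0 < size ks -> all (fun k => 0 < k) ks ->
  block_pattern ks c -> necklace_enum e (sumn ks) c s -> iso_to e (G_valid ks) (G_adj ks).
Proof.
move=> ks_nonempty ks_pos c_blocks s_enum.
apply: (iso_to_of_necklace (pos := G_pos ks) s_enum).
- exact: G_pos_lt.
- exact: G_pos_inj.
- exact: G_pos_surj.
- exact: G_adj_pos.
Qed.

Lemma G2_iso_of_necklace (T : finType) (e : rel T) (c : pred nat) (s : nat -> T) :
  c 0 -> c 1 -> necklace_enum e 2 c s -> iso_to e (G_valid [:: 2]) (G_adj [:: 2]).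
Proof.
move=> c0 c1 [s_inj s_surj s_adj].
apply: (@G_iso_of_necklace _ _ _ (pred1 0)) => //; first by case=> [|//] [|[|]].
split=> // a b lt_a lt_b; first exact: s_inj.
have : a \in iota 0 4 by rewrite mem_iota.
have : b \in iota 0 4 by rewrite mem_iota.
rewrite s_adj // !inE => /or4P[]/eqP-> /or4P[]/eqP->;
  by rewrite /necklace_adj /path_adj /= ?c0 ?c1.
Qed.

Lemma block_decomposition m (c : pred nat) : 0 < m -> ~~ c m.-1 ->
  exists ks, [/\ 0 < size ks, all (fun k => 0 < k) ks, sumn ks = m & block_pattern ks c].
Proof.
elim: m {-2}m (leqnn m) c => [|N IHN] m le_mN c m_gt0 c_last; first lia.
have [j0 c_j0 min_j0] := ex_minnP (ex_intro (fun p => ~~ c p) _ c_last).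
have le_j0 : j0 <= m.-1 by apply: min_j0.
have first_block j : j < j0.+1 -> c j = (j.+1 < j0.+1).
  move=> lt_j; case: (ltngtP j j0) => [lt|//|->]; last by rewrite ltnn; apply/negbTE.
  - by rewrite ltnS lt; apply/negPn/negP=> /min_j0; lia.
  - lia.
case: (ltnP j0.+1 m) => lt_j0m; last first.
  have -> : m = j0.+1 by lia.
  exists [:: j0.+1]; split; rewrite /= ?addn0 // => -[|//] j _ lt_j.
  by rewrite block_start0; apply: first_block.
have [|||ks [ks_nonempty ks_pos sum_ks ks_blocks]] :=
  IHN (m - j0.+1) _ (fun p => c (j0.+1 + p)); [lia | lia | |].
  by rewrite /= (_ : _ + _ = m.-1) //; lia.
exists (j0.+1 :: ks); split; [done | by rewrite /= ks_pos | by rewrite /= sum_ks; lia |].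
case=> [|i] j lt_i lt_j; first by rewrite block_start0 first_block.
by rewrite /block_start /= -/(block_start ks i) -addnA ks_blocks.
Qed.

(** * Structure of CID functions of weight n/2 *)

Lemma hamiltonian_tip_adj m p q : p < m -> q < m ->
  (q.*2.+1 == p.*2.+1 %% m.*2) || (p.*2 == q.*2.+2 %% m.*2) = tip_adj m p q.
Proof.
move=> lt_p lt_q; rewrite /tip_adj !modSn_eq ?ltn_double ?ltn_Sdouble //.
by do 3 (case: ifP => /eqP); do 3 case: eqP; lia.
Qed.

Lemma tip_adj_common m p q r : tip_adj m p r -> tip_adj m q r -> p != q ->
  (q == p.+1 %% m) || (p == q.+1 %% m).
Proof.
by rewrite /tip_adj => /orP[]/eqP-> /orP[]/eqP E; rewrite E ?eqxx ?orbT.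
Qed.

Section TightStructure.
Variables (T : finType) (e : rel T).
Hypotheses (e_sym : symmetric e) (e_irr : irreflexive e).
Hypotheses (e_claw_free : claw_free e) (e_connected : connected_graph e).
Variable f : {ffun T -> 'I_3}.
Hypotheses (f_CID : is_CID e f) (f_tight : (weight f).*2 = #|T|).

Local Notation zero := (zero_at f).

Definition cross x y := e x y && (zero x != zero y).

Lemma cross_sym : symmetric cross.
Proof. by move=> x y; rewrite /cross e_sym eq_sym. Qed.

Lemma cross_irr : irreflexive cross.
Proof. by move=> x; rewrite /cross e_irr. Qed.

Lemma zero_nbr_nonzero x y : zero x -> e x y -> ~~ zero y.
Proof. by move=> zx exy; apply: contraL exy => zy; rewrite (CID_zeros_nonadj f_CID zx zy). Qed.

Lemma crossW x y : cross x y -> e x y.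
Proof. by case/andP. Qed.

Lemma cross_nbr_zero x y : ~~ zero x -> cross x y -> zero y.
Proof. by move=> nzx /andP[_]; rewrite (negbTE nzx); case: (zero y). Qed.

Lemma cross_deg2 x : #|[set y | cross x y]| = 2.
Proof.
case: (boolP (zero x)) => zx.
  have -> : [set y | cross x y] = [set y | e x y].
    apply/setP=> y; rewrite !inE /cross zx; case: (boolP (e x y)) => //= exy.
    by rewrite eq_sym (negbTE (zero_nbr_nonzero zx exy)).
  rewrite -(tight_zero_nbr_sum e_sym e_claw_free f_CID f_tight zx) -sum1dep_card.
  apply: eq_bigr => u eu; have := tight_le1 e_sym e_claw_free f_CID f_tight u.
  by have := zero_nbr_nonzero zx eu; rewrite /zero_at; case: (f u : nat) => [|[]].
rewrite -(tight_zero_deg e_sym e_claw_free f_CID f_tight zx) cardsE.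
apply: eq_card => y; rewrite !inE /cross unfold_in /= e_sym (negbTE zx).
by case: (zero y); rewrite ?andbT ?andbF.
Qed.

Lemma two_cross_nbrs x : exists w1 w2, [/\ cross x w1, cross x w2 & w1 != w2].
Proof.
have : 1 < #|[set y | cross x y]| by rewrite cross_deg2.
by case/card_gt1P=> w1 [w2 []]; rewrite !inE; exists w1, w2.
Qed.

(* The two zero neighbours of x are non-adjacent, so by claw-freeness at x one
   of them is adjacent to y. *)
Lemma common_zero_nbr x y : ~~ zero x -> ~~ zero y -> e x y ->
  exists w, cross x w && cross w y.
Proof.
move=> nzx nzy exy; have [w1 [w2 [xw1 xw2 w12]]] := two_cross_nbrs x.
have zw1 := cross_nbr_zero nzx xw1; have zw2 := cross_nbr_zero nzx xw2.
have neq_y w : zero w -> w != y by move=> zw; apply: contraNneq nzy => <-.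
have := e_claw_free (crossW xw1) (crossW xw2) exy w12 (neq_y _ zw1) (neq_y _ zw2).
rewrite (CID_zeros_nonadj f_CID zw1 zw2) /= => /orP[] ewy; [exists w1 | exists w2];
  by rewrite ?xw1 ?xw2 /cross ewy ?zw1 ?zw2 (negbTE nzy).
Qed.

Lemma cross_connected x y : connect cross x y.
Proof.
apply: (connect_sub _ (e_connected x y)) => {}x {}y exy.
case: (boolP (zero x != zero y)) => d; first by apply: connect1; rewrite /cross exy d.
have nzx : ~~ zero x by apply: contra d => zx; rewrite zx (negbTE (zero_nbr_nonzero zx exy)).
have nzy : ~~ zero y by move: d; rewrite (negbTE nzx); case: (zero y).
have [w /andP[xw wy]] := common_zero_nbr nzx nzy exy.
exact: connect_trans (connect1 xw) (connect1 wy).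
Qed.

Lemma tight_hamiltonian x y : cross x y -> hamiltonian_enum cross (walk cross x y).
Proof. exact: (walk_hamiltonian cross_sym cross_irr cross_deg2 cross_connected). Qed.

Section Necklace.
Variable s : nat -> T.
Hypotheses (s_ham : hamiltonian_enum cross s) (s0_nonzero : ~~ zero (s 0)).

Local Notation n := #|T|.

Lemma hamiltonian_zero_odd t : t < n -> zero (s t) = odd t.
Proof.
case: s_ham => _ _ s_adj; elim: t => [|t IHt] lt_t; first exact/negbTE.
have := s_adj t t.+1 (ltnW lt_t) lt_t; rewrite modn_small // eqxx /= => /andP[_].
by rewrite IHt ?(ltnW lt_t) //=; case: (odd t); case: (zero _).
Qed.

Lemma card_even : ~~ odd n.
Proof.
have n_gt0 : 0 < n by apply/card_gt0P; exists (s 0).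
have lt_pred : n.-1 < n by rewrite ltn_predL.
case: s_ham => _ _ s_adj; have := s_adj _ _ lt_pred n_gt0.
rewrite prednK // modnn eqxx /= => /andP[_].
by rewrite !hamiltonian_zero_odd // -{2}(prednK n_gt0) /= negbK; case: (odd _).
Qed.

Local Notation m := n./2.

Lemma card_double : n = m.*2.
Proof. by rewrite even_halfK ?card_even. Qed.

Lemma double_lt_card p : p < m -> p.*2 < n.
Proof. by rewrite {2}card_double ltn_double. Qed.

Lemma Sdouble_lt_card p : p < m -> p.*2.+1 < n.
Proof. by rewrite {2}card_double ltn_Sdouble. Qed.

Definition rim_edge p := e (s p.*2) (s (p.+1 %% m).*2).

Lemma path_tip_adj p q : p < m -> q < m -> e (s p.*2) (s q.*2.+1) = tip_adj m p q.
Proof.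
case: s_ham => _ _ s_adj lt_p lt_q.
have [lt_p2 lt_q2] := (double_lt_card lt_p, Sdouble_lt_card lt_q).
rewrite -hamiltonian_tip_adj // -card_double -s_adj // /cross.
by rewrite !hamiltonian_zero_odd // odd_double oddS_double andbT.
Qed.

Lemma tip_tip_nonadj p q : p < m -> q < m -> e (s p.*2.+1) (s q.*2.+1) = false.
Proof.
move=> lt_p lt_q; apply: (CID_zeros_nonadj f_CID);
  by rewrite hamiltonian_zero_odd ?oddS_double ?Sdouble_lt_card.
Qed.

Lemma path_path_adj p q : p < m -> q < m ->
  e (s p.*2) (s q.*2) = path_adj m rim_edge p q || path_adj m rim_edge q p.
Proof.
case: s_ham => _ s_surj _ lt_p lt_q; apply/idP/idP => [e_pq|]; last first.
  by case/orP=> /andP[/eqP-> ?] //; rewrite e_sym.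
have ne_pq : p != q by apply: contraTneq e_pq => ->; rewrite e_irr.
have nz t : t < m -> ~~ zero (s t.*2).
  by move=> lt_t; rewrite hamiltonian_zero_odd ?odd_double ?double_lt_card.
have [w /andP[pw wq]] := common_zero_nbr (nz _ lt_p) (nz _ lt_q) e_pq.
have [t lt_t tw] := s_surj w; rewrite -tw in pw wq.
have odd_t : odd t by rewrite -hamiltonian_zero_odd // (cross_nbr_zero (nz _ lt_p) pw).
have tE : t = (t./2).*2.+1 by rewrite -[LHS]odd_double_half odd_t.
have lt_t2 : t./2 < m by rewrite ltn_half_double -card_double.
have tip_p : tip_adj m p t./2 by rewrite -path_tip_adj // -tE (crossW pw).
have tip_q : tip_adj m q t./2 by rewrite -path_tip_adj // -tE e_sym (crossW wq).
rewrite /path_adj /rim_edge.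
by case/orP: (tip_adj_common tip_p tip_q ne_pq) => /eqP E;
  rewrite -E eqxx ?e_pq // [e (s q.*2) _]e_sym e_pq orbT.
Qed.

Lemma hamiltonian_necklace : necklace_enum e m rim_edge s.
Proof.
case: s_ham => s_inj s_surj _; rewrite /necklace_enum -card_double; split=> // a b lt_a lt_b.
rewrite /necklace_adj -[a]odd_double_half -[b]odd_double_half.
have [lt_a2 lt_b2] : a./2 < m /\ b./2 < m by rewrite !ltn_half_double -card_double.
case: (odd a); case: (odd b);
  rewrite ?add0n ?add1n ?odd_double ?oddS_double ?doubleK ?halfS_double.
- exact: tip_tip_nonadj.
- by rewrite e_sym path_tip_adj.
- exact: path_tip_adj.
- exact: path_path_adj.
Qed.

End Necklace.

(* Walking the cycle from a away from w makes w the last tip, so that the rim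
   edge closing the necklace is the absent edge ba. *)
Lemma Omega_of_open_tip w a b :
  zero w -> e w a -> e w b -> a != b -> ~~ e a b -> in_Omega e.
Proof.
move=> zw ewa ewb ne_ab nab; have nza := zero_nbr_nonzero zw ewa.
have [s1 [a_s1 ne_s1w]] : exists s1, cross a s1 /\ s1 != w.
  have [w1 [w2 [aw1 aw2 ne_w12]]] := two_cross_nbrs a.
  by case: (eqVneq w1 w) => [E|]; [exists w2; rewrite -E eq_sym | exists w1].
have s_ham := tight_hamiltonian a_s1; set s := walk cross a s1 in s_ham.
have [s_inj s_surj _] := s_ham; have n_double := card_double s_ham nza.
set m := #|T|./2 in n_double.
have [t lt_t sw] := s_surj w; have [u lt_u sb] := s_surj b.
have odd_t : odd t by rewrite -(hamiltonian_zero_odd s_ham nza) // sw.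
have even_u : ~~ odd u.
  by rewrite -(hamiltonian_zero_odd s_ham nza) // sb (zero_nbr_nonzero zw ewb).
have tE : t = (t./2).*2.+1 by rewrite -[LHS]odd_double_half odd_t.
have uE : u = (u./2).*2 by rewrite -[LHS]odd_double_half (negbTE even_u).
have lt_t2 : t./2 < m by rewrite ltn_half_double -n_double.
have lt_u2 : u./2 < m by rewrite ltn_half_double -n_double.
have m_gt0 : 0 < m by case: (m) lt_t2.
have tip_a : tip_adj m 0 t./2 by rewrite -(path_tip_adj s_ham nza m_gt0 lt_t2) -tE sw e_sym.
have tip_b : tip_adj m u./2 t./2.
  by rewrite -(path_tip_adj s_ham nza lt_u2 lt_t2) -uE -tE sw sb e_sym.
have t_last : t./2 = m.-1.
  case/orP: tip_a => /eqP E; first by case/negP: ne_s1w; rewrite -sw {1}tE E.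
  by apply/eqP; rewrite -modS_eq0 // -E.
have u_last : u./2 = m.-1.
  move: tip_b; rewrite t_last /tip_adj prednK // modnn => /orP[/eqP-> // | /eqP E].
  by case/negP: ne_ab; apply/eqP; rewrite -sb {1}uE E.
have last_open : ~~ rim_edge s m.-1.
  by rewrite /rim_edge prednK ?modnn // -u_last -uE sb e_sym.
have [ks [ks_nonempty ks_pos sum_ks ks_blocks]] := block_decomposition m_gt0 last_open.
right; exists ks; do 2 split => //.
apply: (G_iso_of_necklace ks_nonempty ks_pos ks_blocks).
by rewrite sum_ks; apply: hamiltonian_necklace.
Qed.

Lemma Omega_of_closed_tips : 4 <= #|T| ->
  (forall w a b, zero w -> e w a -> e w b -> a != b -> e a b) -> in_Omega e.
Proof.
move=> n_ge4 tips_closed.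
have [x0 nz0] : exists x, ~~ zero x.
  apply/existsP; apply: contraTT n_ge4 => /existsPn all_zero.
  rewrite -f_tight /weight big1 // => v _; apply/eqP; exact: negbNE (all_zero v).
have [s1 [_ [x0_s1 _ _]]] := two_cross_nbrs x0.
have s_ham := tight_hamiltonian x0_s1; set s := walk cross x0 s1 in s_ham.
have [s_inj _ _] := s_ham; have n_double := card_double s_ham nz0.
have s_neck := hamiltonian_necklace s_ham nz0.
set m := #|T|./2 in n_double s_neck; have m_ge2 : 1 < m by rewrite -leq_double -n_double.
have rim_closed p : p < m -> rim_edge s p.
  move=> lt_p; have lt_pS : p.+1 %% m < m by rewrite ltn_mod; case: (m) m_ge2.
  have ne : s p.*2 != s (p.+1 %% m).*2.
    apply: contra_neq (modS_neq m_ge2 lt_p) => /s_inj.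
    by rewrite n_double !ltn_double => /(_ lt_p lt_pS) /double_inj.
  apply: (tips_closed (s p.*2.+1)) ne.
  - by rewrite (hamiltonian_zero_odd s_ham nz0) ?oddS_double // n_double ltn_Sdouble.
  - by rewrite e_sym (path_tip_adj s_ham nz0 lt_p lt_p) /tip_adj eqxx.
  - by rewrite e_sym (path_tip_adj s_ham nz0 lt_pS lt_p) /tip_adj eqxx orbT.
case: (ltnP 2 m) => [m_ge3 | m_le2].
  by left; exists m; split=> //; apply: sun_iso_of_necklace s_neck.
have m2 : m = 2 by apply/eqP; rewrite eqn_leq m_le2.
right; exists [:: 2]; do 2 split => //.
by move: s_neck; rewrite m2; apply: G2_iso_of_necklace; apply: rim_closed; rewrite m2.
Qed.

Lemma tight_CID_Omega : 4 <= #|T| -> in_Omega e.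
Proof.
move=> n_ge4.
case: (boolP [exists w, exists a, exists b, [&& zero w, e w a, e w b, a != b & ~~ e a b]]).
  by case/existsP=> w /existsP[a /existsP[b /and5P[]]]; apply: Omega_of_open_tip.
move/existsPn=> no_open; apply: Omega_of_closed_tips => // w a b zw ewa ewb ne_ab.
by move: (no_open w) => /existsPn/(_ a)/existsPn/(_ b); rewrite zw ewa ewb ne_ab negbK.
Qed.

End TightStructure.

(** * CID functions of weight n/2 on Omega *)

Section Indicator.
Variables (T : finType) (e : rel T) (A : {set T}).

Definition indicator : {ffun T -> 'I_3} := [ffun x => inord (x \in A)].

Lemma indicatorE x : (indicator x : nat) = (x \in A).
Proof. by rewrite ffunE inordK //; case: (x \in A). Qed.

Lemma weight_indicator : weight indicator = #|A|.
Proof. by rewrite /weight card_sum_nat; apply: eq_bigr => x _; rewrite indicatorE. Qed.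

Lemma indicator_CID :
  (forall u v, u \notin A -> v \notin A -> ~~ e u v) ->
  (forall v, v \notin A -> exists a b, [/\ a \in A, b \in A, a != b, e v a & e v b]) ->
  is_CID e indicator.
Proof.
move=> outside_indep outside_dom; apply/andP; split.
  apply/forallP=> v; apply/implyP; rewrite indicatorE eqb0 => vA.
  have [a [b [aA bA ne_ab eva evb]]] := outside_dom v vA.
  rewrite (bigD1 a) //= (bigD1 b) /=; last by rewrite evb eq_sym ne_ab.
  by rewrite !indicatorE aA bA addnA leq_addr.
apply/forallP=> u; apply/forallP=> v; apply/implyP; rewrite !indicatorE !eqb0.
by case/andP; apply: outside_indep.
Qed.

End Indicator.

Lemma card_le_card_compl (T : finType) (A : {set T}) (g : T -> T) :
  {in A &, injective g} -> {in A, forall x, g x \notin A} -> #|A| <= #|~: A|.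
Proof.
move=> g_inj g_out; rewrite -(card_in_imset g_inj); apply: subset_leq_card.
by apply/subsetP=> _ /imsetP[x xA ->]; rewrite inE g_out.
Qed.

Definition is_path_label (l : lab) := if l is LV _ _ then true else false.

Lemma half_CID_of_iso (T : finType) (e : rel T) (valid : pred lab) (adj : rel lab)
    (mate : lab -> lab) :
  iso_to e valid adj ->
  (forall l l', ~~ is_path_label l -> ~~ is_path_label l' -> adj l l' = false) ->
  (forall l, valid l -> ~~ is_path_label l -> exists l1 l2,
     [/\ valid l1 && valid l2, is_path_label l1 && is_path_label l2, l1 <> l2
       & adj l l1 && adj l l2]) ->
  (forall l, valid l -> is_path_label l -> valid (mate l) && ~~ is_path_label (mate l)) ->
  {in [pred l | valid l && is_path_label l] &, injective mate} ->
  exists f, is_CID e f /\ (weight f).*2 <= #|T|.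
Proof.
case=> phi [phi_inj phi_valid phi_surj phi_adj] tips_indep tips_dom mate_tip mate_inj.
pose A := [set x | is_path_label (phi x)].
exists (indicator A); split.
  apply: indicator_CID => [u v|v]; rewrite !inE => tip_u.
    by move=> tip_v; rewrite phi_adj tips_indep.
  have [l1 [l2 [/andP[v1 v2] /andP[p1 p2] ne_l12 /andP[a1 a2]]]] :=
    tips_dom _ (phi_valid v) tip_u.
  have [[x1 E1] [x2 E2]] := (phi_surj _ v1, phi_surj _ v2).
  exists x1, x2; rewrite !inE !phi_adj E1 E2 p1 p2 a1 a2; split=> //.
  by apply/eqP=> E; apply: ne_l12; rewrite -E1 -E2 E.
have lift x : exists y, is_path_label (phi x) -> phi y = mate (phi x).
  case: (boolP (is_path_label (phi x))) => [px|_]; last by exists x.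
  by case/andP: (mate_tip _ (phi_valid x) px) => /phi_surj[y <-] _; exists y.
pose g x := proj1_sig (constructive_indefinite_description _ (lift x)).
have gP x : x \in A -> phi (g x) = mate (phi x).
  by rewrite inE /g; case: constructive_indefinite_description.
have inA x : (x \in A) = is_path_label (phi x) by rewrite inE.
rewrite weight_indicator -addnn -(cardsC A) leq_add2l.
apply: (@card_le_card_compl _ _ g) => [x y xA yA /(congr1 phi)|x].
  rewrite !gP // => /mate_inj E; apply/phi_inj/E; rewrite inE /= phi_valid -inA //.
rewrite !inA => px; rewrite gP ?inA //.
by case/andP: (mate_tip _ (phi_valid x) px).
Qed.

Lemma sun_half_CID (T : finType) (e : rel T) k : 3 <= k ->
  iso_to e (sun_valid k) (sun_adj k) -> exists f, is_CID e f /\ (weight f).*2 <= #|T|.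
Proof.
move=> k_ge3 iso.
apply: (half_CID_of_iso (mate := fun l => if l is LV i j then LU i j else l) iso).
- by case=> [i j|i j|i] [i' j'|i' j'|i'].
- case=> [i j|i j|i] //= /andP[/eqP-> lt_j] _.
  exists (LV 0 j), (LV 0 (j.+1 %% k)); rewrite /= lt_j ltn_mod /sun_adj /= !eqxx orbT.
  split=> //; first lia.
  by case=> /eqP; apply/negP; rewrite eq_sym modS_neq //; lia.
- by case=> [i j|i j|i] //= ->.
- by move=> [i j|i j|i] [i' j'|i' j'|i']; rewrite !inE /= ?andbF // => _ _ [-> ->].
Qed.

Lemma G_one_card (T : finType) (e : rel T) :
  iso_to e (G_valid [:: 1]) (G_adj [:: 1]) -> #|T| <= 2.
Proof.
case=> phi [phi_inj phi_valid _ _].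
have phiE x : phi x = LV 0 0 \/ phi x = LW 0.
  move: (phi_valid x); case: (phi x) => [i j|i j|i] /=.
  - case/andP=> lt_i; have -> : i = 0 by lia.
    by move=> /= lt_j; left; have -> : j = 0 by lia.
  - by case/andP=> lt_i; have -> : i = 0 by lia.
  - by move=> lt_i; right; have -> : i = 0 by lia.
have inj : injective (fun x => is_path_label (phi x)).
  by move=> x y E; apply: phi_inj; move: E; case: (phiE x) (phiE y) => -> [] ->.
by have := leq_card _ inj; rewrite card_bool.
Qed.

Lemma G_half_CID (T : finType) (e : rel T) ks : 2 < #|T| ->
  0 < size ks -> all (fun k => 0 < k) ks ->
  iso_to e (G_valid ks) (G_adj ks) -> exists f, is_CID e f /\ (weight f).*2 <= #|T|.
Proof.
move=> n_gt2 ks_nonempty ks_pos iso.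
have ks_ne1 : ks != [:: 1].
  by apply: contraTneq n_gt2 => ks1; rewrite ks1 in iso; rewrite -leqNgt (G_one_card iso).
have k_gt0 i : i < size ks -> 0 < nth 0 ks i by move=> lt_i; apply: (all_nthP 0 ks_pos).
pose mate l := if l is LV i j then (if j.+1 < nth 0 ks i then LU i j else LW i) else l.
apply: (half_CID_of_iso (mate := mate) iso).
- by case=> [i j|i j|i] [i' j'|i' j'|i'].
- case=> [i j|i j|i] //= lt_i _.
    case/andP: lt_i => lt_i lt_j; exists (LV i j), (LV i j.+1).
    by rewrite /= lt_i lt_j (ltnW lt_j) /G_adj /= !eqxx /= orbT; split=> // -[]; lia.
  have lt_iS : i.+1 %% size ks < size ks by rewrite ltn_mod.
  exists (LV i (nth 0 ks i).-1), (LV (i.+1 %% size ks) 0).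
  rewrite /= lt_i lt_iS k_gt0 // /G_adj /= !eqxx /= orbT; split=> //.
    by have := k_gt0 _ lt_i; lia.
  case=> iE k1; have r1 : size ks = 1.
    apply/eqP; rewrite eqn_leq ks_nonempty andbT leqNgt; apply/negP=> r_gt1.
    by move: (modS_neq r_gt1 lt_i); rewrite -iE eqxx.
  have i0 : i = 0 by lia.
  case/negP: ks_ne1; apply/eqP/(@eq_from_nth _ 0); rewrite r1 // => -[|//] _.
  by rewrite i0 in k1; have := k_gt0 _ ks_nonempty; rewrite /=; lia.
- case=> [i j|i j|i] //= /andP[lt_i lt_j] _.
  by case: (ltnP j.+1 (nth 0 ks i)) => lt_jk /=; rewrite lt_i ?lt_jk.
- move=> [i j|i j|i] [i' j'|i' j'|i']; rewrite !inE /= ?andbF //.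
  move=> /andP[lt_i _] /andP[lt_i' _].
  rewrite /mate; case: ifP => lt_j; case: ifP => lt_j' //=; first by case=> -> ->.
  by case=> E; subst i'; congr LV; lia.
Qed.

Lemma Omega_half_CID (T : finType) (e : rel T) : 2 < #|T| -> in_Omega e ->
  exists f, is_CID e f /\ (weight f).*2 <= #|T|.
Proof.
move=> n_gt2 [[k [k_ge3 iso]] | [ks [ks_nonempty [ks_pos iso]]]].
  exact: sun_half_CID k_ge3 iso.
exact: G_half_CID n_gt2 ks_nonempty ks_pos iso.
Qed.

Section Gamma.
Variables (T : finType) (e : rel T).

Lemma gamma_cI_le f : is_CID e f -> gamma_cI e <= weight f.
Proof. exact: bigminn_le. Qed.

Lemma gamma_cI_attained : exists2 f, is_CID e f & weight f = gamma_cI e.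
Proof.
pose two : {ffun T -> 'I_3} := [ffun=> inord 2].
have two_CID : is_CID e two.
  by apply/andP; split; [apply/forallP | apply/forallP=> u; apply/forallP] => v;
    rewrite !ffunE inordK.
have weight_two : weight two = 2 * #|T|.
  by rewrite /weight -sum1_card big_distrr; apply: eq_bigr => x _; rewrite ffunE inordK.
rewrite /gamma_cI; apply: (big_ind (fun g => exists2 f, is_CID e f & weight f = g)).
- by exists two.
- by move=> g g' attained_g attained_g'; rewrite /minn; case: ltnP.
- by move=> f f_CID; exists f.
Qed.

Lemma double_gamma_cI_ge : symmetric e -> claw_free e -> #|T| <= (gamma_cI e).*2.
Proof.
move=> e_sym e_claw_free; have [f f_CID <-] := gamma_cI_attained.
exact: card_le_double_weight.
Qed.

End Gamma.

Theorem theorem8 (T : finType) (e : rel T) :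
  simple_graph e -> connected_graph e -> claw_free e -> 4 <= #|T| ->
  (2 * gamma_cI e = #|T| <-> in_Omega e).
Proof.
move=> [e_sym e_irr] e_connected e_claw_free n_ge4; split=> [gamma_half | Omega_e].
  have [f f_CID f_min] := gamma_cI_attained e.
  by apply: tight_CID_Omega f_CID _ n_ge4; rewrite // f_min -mul2n.
have [f [f_CID f_half]] := Omega_half_CID (ltnW n_ge4) Omega_e.
have := gamma_cI_le f_CID; have := double_gamma_cI_ge e_sym e_claw_free; rewrite mul2n; lia.
Qed.
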